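(* Assume $|V|\ge2$ and let $\overline\kappa_0=\inf_{x\ne y}\overline\kappa(x,y)$. If $\mu>0$ and there exists a nonzero $f\in\mathbb{R}^V$ with $\mathcal{L}^0f=\mu f$, then $\overline\kappa_0\le\mu$.
   Context: Let $H=(V,E,w)$ be a weighted hypergraph: $V$ is a finite set, $E$ a set of nonempty subsets of $V$, $w\colon E\to\mathbb{R}_{>0}$. Write $x\sim y$ if some $e\in E$ contains both; $H$ is assumed connected. The degree is $d_x=\sum_{e\ni x}w_e>0$, $D=\mathrm{diag}(d_x)$. The distance $d(x,y)$ is the minimal $n$ with a chain $x=z_0\sim\cdots\sim z_n=y$. $\delta_x$ is the indicator of $x$. $\mathbb{R}^V$ carries the inner product $\langle f,g\rangle=\sum_x f(x)g(x)/d_x$ with norm $\|\cdot\|$. For $e\in E$ let $B_e=\mathrm{Conv}\{\delta_x-\delta_y : x,y\in e\}$. The multivalued hypergraph Laplacian is $L(f)=\{\sum_{e}w_e\mathtt{b}_e(\mathtt{b}_e^\top f) : \mathtt{b}_e\in\operatorname{argmax}_{\mathtt b\in B_e}\mathtt b^\top f\}$ and the normalized Laplacian is $\mathcal{L}f=L(D^{-1}f)$, a maximal monotone operator on $(\mathbb{R}^V,\langle\cdot,\cdot\rangle)$. For $f\in\mathbb{R}^V$, $\mathcal{L}f$ is a nonempty closed convex set and $\mathcal{L}^0f$ denotes its unique element of minimal norm $\|\cdot\|$. For $\lambda>0$ the resolvent $J_\lambda=(I+\lambda\mathcal L)^{-1}$ is a single-valued map $\mathbb{R}^V\to\mathbb{R}^V$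 (equivalently $J_\lambda f=\operatorname{argmin}_g\{\frac{1}{2\lambda}\|f-g\|^2+Q(D^{-1}g)\}$, $Q(g)=\frac12\sum_e w_e\max_{x,y\in e}(g(x)-g(y))^2$). A function $f$ is weighted $1$-Lipschitz if $|f(x)/d_x-f(y)/d_y|\le d(x,y)$ for all $x,y$; $\mathrm{Lip}^1_w(V)$ denotes the set of such functions. $\mathrm{KD}_\lambda(x,y)=\sup\{\langle J_\lambda f,\delta_x-\delta_y\rangle : f\in\mathrm{Lip}^1_w(V)\}$. For $x\ne y$: $\kappa_\lambda(x,y)=1-\mathrm{KD}_\lambda(x,y)/d(x,y)$ and $\overline\kappa(x,y)=\limsup_{\lambda\downarrow0}\kappa_\lambda(x,y)/\lambda$. *)

From HB Require Import structures.
From mathcomp Require Import all_boot all_order all_algebra.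
From mathcomp Require Import all_classical all_reals all_analysis.
Set Implicit Arguments. Unset Strict Implicit. Unset Printing Implicit Defensive.
Import Order.TTheory GRing.Theory Num.Theory.
Import numFieldNormedType.Exports.
Local Open Scope classical_set_scope.
Local Open Scope ring_scope.

Section Hypergraph.
Variables (R : realType) (V : finType) (E : {set {set V}}) (w : {set V} -> R).

Definition adjacent (x y : V) : bool := [exists e in E, (x \in e) && (y \in e)].

Definition chain (n : nat) (x y : V) : Prop :=
  exists p : seq V, [/\ path adjacent x p, last x p = y & size p = n].

Definition connected_hg : Prop := forall x y : V, exists n, chain n x y.

Definition degree (x : V) : R := \sum_(e in E | x \in e) w e.

Definition is_hypergraph : Prop :=
  [/\ (forall e, e \in E -> (0 < #|e|)%N), (forall e, e \in E -> 0 < w e),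
      (forall x, 0 < degree x) & connected_hg].

Definition hdist (x y : V) : nat :=
  xget 0%N [set n | chain n x y /\ forall m, chain m x y -> (n <= m)%N].

Definition delta (x : V) : V -> R := fun z => (z == x)%:R.

Definition winner (f g : V -> R) : R := \sum_x f x * g x / degree x.
Definition wnorm (f : V -> R) : R := Num.sqrt (winner f f).

Definition dotp (b f : V -> R) : R := \sum_x b x * f x.

(* B_e = Conv { delta_x - delta_y : x, y in e } *)
Definition Bset (e : {set V}) : set (V -> R) :=
  [set b | exists c : V * V -> R,
     [/\ (forall p, 0 <= c p), (forall p, c p != 0 -> (p.1 \in e) && (p.2 \in e)),
         \sum_p c p = 1 &
         b = (fun z => \sum_p c p * (delta p.1 z - delta p.2 z))]].

Definition Lset (f : V -> R) : set (V -> R) :=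
  [set u | exists b : {set V} -> V -> R,
     (forall e, e \in E ->
        b e \in Bset e /\ (forall b', b' \in Bset e -> dotp b' f <= dotp (b e) f)) /\
     u = (fun z => \sum_(e in E) w e * b e z * dotp (b e) f)].

Definition nLap (f : V -> R) : set (V -> R) := Lset (fun x => f x / degree x).

Definition nLap0 (f : V -> R) : V -> R :=
  xget (fun _ => 0)
    [set u | u \in nLap f /\ forall v, v \in nLap f -> wnorm u <= wnorm v].

(* resolvent J_lambda = (I + lambda cL)^{-1} *)
Definition resolvent (lam : R) (f : V -> R) : V -> R :=
  xget (fun _ => 0)
    [set g | exists u, u \in nLap g /\ f = (fun z => g z + lam * u z)].

Definition wLip1 (f : V -> R) : Prop :=
  forall x y, `|f x / degree x - f y / degree y| <= (hdist x y)%:R.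

Local Open Scope ereal_scope.

Definition KD (lam : R) (x y : V) : \bar R :=
  ereal_sup [set (winner (resolvent lam f) (fun z => delta x z - delta y z))%:E
            | f in wLip1].

Definition kappa (lam : R) (x y : V) : \bar R :=
  1 - KD lam x y * ((hdist x y)%:R^-1)%:E.

Definition kappa_bar (x y : V) : \bar R :=
  limf_esup (fun lam : R => kappa lam x y * (lam^-1)%:E) (at_right (0 : R)).

Definition kappa_bar0 : \bar R := 
  ereal_inf [set k | exists x y : V, x <> y /\ k = kappa_bar x y].

End Hypergraph.

From HB Require Import structures.
From mathcomp Require Import all_boot all_order all_algebra.
From mathcomp Require Import all_classical all_reals all_analysis.
From mathcomp Require Import lra ring.
Set Implicit Arguments. Unset Strict Implicit. Unset Printing Implicit Defensive.
Import Order.TTheory GRing.Theory Num.Theory.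
Local Open Scope classical_set_scope.
Local Open Scope ring_scope.

(* Idea of the proof (eigenfunctions are tight test functions for the
   curvature).  Let cL^0 f = mu f with f <> 0 and mu > 0.  Then mu f lies in
   cL f, and F = D^{-1} f is not constant (cL kills constants).  Pick a pair
   a <> b maximizing |F x - F y| / d(x,y) and rescale f to h = c f so that
   D^{-1} h is 1-Lipschitz with slope exactly d(a,b) between a and b.  Since
   cL is positively 1-homogeneous and odd, mu h lies in cL h, hence
   J_lam h = h / (1 + lam mu): indeed the resolvent is characterized by
   g + lam u = h with u in cL g, and this g is unique by monotonicity of cL.
   Testing KD_lam(a,b) with h gives KD_lam(a,b) >= d(a,b) / (1 + lam mu), so
   kappa_lam(a,b) / lam <= mu / (1 + lam mu) <= mu for every lam > 0, whence
   kappa-bar(a,b) <= mu and kappa-bar_0 <= mu. *)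

Section EdgePolytope.
Variables (R : realType) (V : finType).

Lemma dotpZr (b F : V -> R) c : dotp b (fun z => c * F z) = c * dotp b F.
Proof. by rewrite /dotp mulr_sumr; apply: eq_bigr => z _; rewrite mulrCA. Qed.

Lemma dotpNl (b F : V -> R) : dotp (fun z => - b z) F = - dotp b F.
Proof. by rewrite /dotp -sumrN; apply: eq_bigr => z _; rewrite mulNr. Qed.

Lemma dotpNr (b F : V -> R) : dotp b (fun z => - F z) = - dotp b F.
Proof. by rewrite /dotp -sumrN; apply: eq_bigr => z _; rewrite mulrN. Qed.

Lemma dotpBl (b c F : V -> R) : dotp (fun z => b z - c z) F = dotp b F - dotp c F.
Proof. by rewrite /dotp -sumrB; apply: eq_bigr => z _; rewrite mulrBl. Qed.

Lemma dotpBr (b F G : V -> R) : dotp b (fun z => F z - G z) = dotp b F - dotp b G.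
Proof. by rewrite /dotp -sumrB; apply: eq_bigr => z _; rewrite mulrBr. Qed.

Lemma sum_mul_delta (F : V -> R) a : \sum_z F z * delta R a z = F a.
Proof.
rewrite (bigD1 a) //= /delta eqxx mulr1 big1 ?addr0 // => i /negbTE ->.
by rewrite mulr0.
Qed.

(* B_e is symmetric: swapping the pairs (x,y) negates an element. *)
Lemma Bset_neg e (b : V -> R) : b \in Bset e -> (fun z => - b z) \in Bset e.
Proof.
pose swap (p : V * V) := (p.2, p.1).
have swap_inj : injective swap by move=> [? ?] [? ?] [-> ->].
rewrite !inE => -[c [c0 ce c1 ->]].
exists (fun p => c (swap p)); split.
- by move=> p; apply: c0.
- by move=> p /ce /= /andP[-> ->].
- by rewrite -c1 (reindex_inj swap_inj); apply: eq_bigr => -[].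
- apply/funext => z; rewrite -sumrN (reindex_inj swap_inj) /=.
  by apply: eq_bigr => -[x y] _ /=; rewrite -mulrN opprB.
Qed.

(* Every element of B_e has zero total mass, so it annihilates constants. *)
Lemma Bset_dotp_const e (b : V -> R) (k : R) :
  b \in Bset e -> dotp b (fun _ => k) = 0.
Proof.
have sum_delta (x : V) : \sum_z delta R x z = 1.
  by rewrite -(sum_mul_delta (fun _ => 1) x) /=; apply: eq_bigr => z _; rewrite mul1r.
rewrite inE => -[c [_ _ _ ->]]; rewrite /dotp -big_distrl /=.
rewrite exchange_big /= big1 ?mul0r // => p _.
by rewrite -mulr_sumr sumrB !sum_delta subrr mulr0.
Qed.

End EdgePolytope.

Section Laplacian.
Variables (R : realType) (V : finType) (E : {set {set V}}) (w : {set V} -> R).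
Hypothesis w_pos : forall e, e \in E -> 0 < w e.
Hypothesis deg_pos : forall x, 0 < degree E w x.

Lemma dotp_Lsum (b : {set V} -> V -> R) (a : {set V} -> R) (G : V -> R) :
  dotp (fun z => \sum_(e in E) w e * b e z * a e) G =
  \sum_(e in E) w e * a e * dotp (b e) G.
Proof.
rewrite /dotp (eq_bigr (fun z => \sum_(e in E) w e * b e z * a e * G z)).
  rewrite exchange_big /=; apply: eq_bigr => e _.
  rewrite mulr_sumr; apply: eq_bigr => z _.
  by rewrite -!mulrA; congr (_ * _); rewrite mulrCA.
by move=> z _; rewrite mulr_suml.
Qed.

Lemma Lset_scale (F u : V -> R) c : 0 < c -> u \in Lset E w F ->
  (fun z => c * u z) \in Lset E w (fun z => c * F z).
Proof.
move=> c0; rewrite !inE => -[b [hb ->]]; exists b; split.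
  move=> e eE; have [Bb bmax] := hb e eE; split => // b' /bmax.
  by rewrite !dotpZr ler_pM2l.
apply/funext => z; rewrite mulr_sumr; apply: eq_bigr => e _.
by rewrite dotpZr mulrCA.
Qed.

(* L is odd: L(-F) = - L(F), thanks to the symmetry of B_e. *)
Lemma Lset_neg (F u : V -> R) : u \in Lset E w F ->
  (fun z => - u z) \in Lset E w (fun z => - F z).
Proof.
rewrite !inE => -[b [hb ->]]; exists (fun e z => - b e z); split.
  move=> e eE; have [Bb bmax] := hb e eE; split; first exact: Bset_neg.
  by move=> b' /Bset_neg /bmax; rewrite dotpNl !dotpNr dotpNl opprK.
apply/funext => z; rewrite -sumrN; apply: eq_bigr => e _.
by rewrite dotpNl dotpNr opprK mulrN mulNr.
Qed.

Lemma Lset_const (u : V -> R) k : u \in Lset E w (fun _ => k) -> u = (fun _ => 0).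
Proof.
rewrite inE => -[b [hb ->]]; apply/funext => z; apply: big1 => e eE.
by rewrite (Bset_dotp_const k (hb e eE).1) mulr0.
Qed.

(* Edgewise,
   with a_i = max_{B_e} <., F_i> >= 0 and p, q the cross pairings, the
   maximality gives |p| <= a2, |q| <= a1, and the edge term
   a1^2 - a1 q - a2 p + a2^2 is then nonnegative. *)
Lemma Lset_mono (F1 F2 u1 u2 : V -> R) :
  u1 \in Lset E w F1 -> u2 \in Lset E w F2 ->
  0 <= dotp (fun z => u1 z - u2 z) (fun z => F1 z - F2 z).
Proof.
rewrite !inE => -[b1 [hb1 ->]] [b2 [hb2 ->]].
rewrite dotpBl !dotp_Lsum -sumrB; apply: sumr_ge0 => e eE.
have [B1 m1] := hb1 e eE; have [B2 m2] := hb2 e eE.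
have i1 := m1 _ B2; have i2 := m1 _ (Bset_neg B2).
have i3 := m2 _ B1; have i4 := m2 _ (Bset_neg B1).
rewrite !dotpNl in i2 i4; rewrite !dotpBr.
set a1 := dotp (b1 e) F1 in i1 i2 *; set a2 := dotp (b2 e) F2 in i3 i4 *.
set p := dotp (b1 e) F2 in i3 i4 *; set q := dotp (b2 e) F1 in i1 i2 *.
rewrite -mulrA -[w e * a2 * _]mulrA -mulrBr; apply: mulr_ge0; first exact/ltW/w_pos.
have h1 : 0 <= a1 * (a2 - p) by apply: mulr_ge0; lra.
have h2 : 0 <= a2 * (a1 - q) by apply: mulr_ge0; lra.
have h3 : 0 <= (a1 - a2) ^+ 2 by apply: sqr_ge0.
nra.
Qed.

Lemma nLap_scale (g u : V -> R) c : c != 0 -> u \in nLap E w g ->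
  (fun z => c * u z) \in nLap E w (fun z => c * g z).
Proof.
move=> c0 ug; rewrite /nLap.
have -> : (fun x => c * g x / degree E w x) = (fun x => c * (g x / degree E w x)).
  by apply/funext => x; rewrite mulrA.
have [cneg|cpos|c_eq0] := ltgtP c 0; last by move: c0; rewrite c_eq0 eqxx.
- have := Lset_neg (Lset_scale (etrans (oppr_gt0 c) cneg) ug).
  by congr (_ \in Lset E w _); apply/funext => z; rewrite mulNr opprK.
- exact: Lset_scale.
Qed.

(* The resolvent: if h = g + lam u with u in cL g, then J_lam h = g.  Two such
   decompositions g, g' satisfy, by monotonicity,
   0 <= <u' - u, D^{-1}(g' - g)> = - sum (g' - g)^2 / (lam d), so g' = g. *)
Lemma resolvent_eq (lam : R) (h g u : V -> R) :
  0 < lam -> u \in nLap E w g -> h = (fun z => g z + lam * u z) ->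
  resolvent E w lam h = g.
Proof.
move=> lam0 ug hE; apply: xget_unique; first by exists u.
move=> g' [u' [ug' hE']].
pose q z := (g' z - g z) ^+ 2 / (lam * degree E w z).
have q_ge0 z : true -> 0 <= q z.
  by move=> _; apply: divr_ge0; [exact: sqr_ge0 | exact/ltW/mulr_gt0].
have pairing z : (u' z - u z) * (g' z / degree E w z - g z / degree E w z) = - q z.
  have ez : g' z + lam * u' z = g z + lam * u z.
    by move: (congr1 (fun f => f z) hE) (congr1 (fun f => f z) hE') => /= <- <-.
  have -> : u' z - u z = - (g' z - g z) / lam.
    apply: (mulfI (lt0r_neq0 lam0)); rewrite mulrCA divff ?lt0r_neq0 // mulr1; lra.
  by rewrite /q; field; rewrite ?lt0r_neq0.
have := Lset_mono ug' ug; rewrite /dotp (eq_bigr _ (fun z _ => pairing z)).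
rewrite sumrN oppr_ge0 => q_le0.
have q_sum0 : \sum_z q z = 0 by apply/eqP; rewrite eq_le q_le0 sumr_ge0.
apply/funext => z; move: (@psumr_eq0P _ _ _ _ q_ge0 q_sum0 z isT) => /eqP.
rewrite /q mulf_eq0 invr_eq0 !mulf_eq0 (gt_eqF lam0) (gt_eqF (deg_pos z)).
by rewrite !orbF orbb subr_eq0 => /eqP.
Qed.

(* An eigenfunction f of cL^0 with eigenvalue mu != 0 is an eigenfunction of
   cL: otherwise the defining xget fails and cL^0 f = 0, contradicting f <> 0. *)
Lemma nLap0_eigen (mu : R) (f : V -> R) x : mu != 0 -> f x != 0 ->
  nLap0 E w f = (fun z => mu * f z) -> (fun z => mu * f z) \in nLap E w f.
Proof.
move=> mu0 fx; rewrite /nLap0; case: xgetP => [u _ [uin _] <- // | _ h0].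
have /eqP := congr1 (fun g => g x) h0.
by rewrite eq_sym /= mulf_eq0 (negbTE mu0) (negbTE fx).
Qed.

Lemma eigen_nonconstant (mu : R) (f : V -> R) x : mu != 0 -> f x != 0 ->
  (fun z => mu * f z) \in nLap E w f ->
  exists x0 y0, f x0 / degree E w x0 != f y0 / degree E w y0.
Proof.
move=> mu0 fx mf; apply: contrapT => nc.
have Fconst : (fun z => f z / degree E w z) = (fun _ => f x / degree E w x).
  by apply/funext => y; apply/eqP; apply: contrapT => ne; apply: nc; exists y, x; exact/negP.
move: mf; rewrite /nLap Fconst => /Lset_const /(congr1 (fun g => g x)) /= /eqP.
by rewrite mulf_eq0 (negbTE mu0) (negbTE fx).
Qed.

Lemma winner_delta (g : V -> R) x y :
  winner E w g (fun z => delta R x z - delta R y z)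
  = g x / degree E w x - g y / degree E w y.
Proof.
rewrite /winner (eq_bigr (fun z => g z / degree E w z * delta R x z
                                 - g z / degree E w z * delta R y z)).
  by rewrite sumrB !sum_mul_delta.
by move=> z _; rewrite mulrAC mulrBr.
Qed.

End Laplacian.

Section Curvature.
Variables (R : realType) (V : finType) (E : {set {set V}}) (w : {set V} -> R).
Hypothesis w_pos : forall e, e \in E -> 0 < w e.
Hypothesis deg_pos : forall x, 0 < degree E w x.
Hypothesis connected : connected_hg E.

Lemma hdist_gt0 x y : x != y -> (0 < hdist E x y)%N.
Proof.
move=> xy; have [n cn] := connected x y.
have exP : exists n, `[< chain E n x y >] by exists n; apply/asboolP.
case: (ex_minnP exP) => m /asboolP cm mmin.
rewrite /hdist; case: xgetP; last first.
  by move=> /(_ m); case; split => // k ck; apply: mmin; apply/asboolP.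
move=> n' _ [[p [_ lp sp]] _].
rewrite lt0n; apply/eqP => n0; move: sp; rewrite n0 => /size0nil pE.
by move: lp xy; rewrite pE /= => ->; rewrite eqxx.
Qed.

(* A weighted 1-Lipschitz eigenfunction h (cL h contains mu h) which is tight
   on (a, b), i.e. D^{-1} h increases by exactly d(a,b) from b to a, satisfies
   kappa_lam(a,b) / lam <= mu for every lam > 0: J_lam h = h / (1 + lam mu)
   gives KD_lam(a,b) >= d(a,b) / (1 + lam mu). *)
Lemma kappa_tight_eigen (a b : V) (h : V -> R) (mu : R) :
  0 < mu -> (0 < hdist E a b)%N -> wLip1 E w h ->
  (fun z => mu * h z) \in nLap E w h ->
  h a / degree E w a - h b / degree E w b = (hdist E a b)%:R ->
  forall lam : R, 0 < lam -> (kappa E w lam a b * (lam^-1)%:E <= mu%:E)%E.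
Proof.
move=> mu0 hab lip mh tight lam lam0.
set D : R := (hdist E a b)%:R; have D0 : 0 < D by rewrite ltr0n.
set k : R := (1 + lam * mu)^-1.
have lm0 : 0 < lam * mu by apply: mulr_gt0.
have k0 : 0 < k by rewrite invr_gt0; lra.
have kk : k * (1 + lam * mu) = 1 by rewrite mulVf //; apply: lt0r_neq0; lra.
have resolvent_h : resolvent E w lam h = (fun z => k * h z).
  apply: (resolvent_eq w_pos deg_pos lam0 (nLap_scale (lt0r_neq0 k0) mh)).
  apply/funext => z.
  by transitivity (k * (1 + lam * mu) * h z); [rewrite kk mul1r | ring].
have KD_ge : ((k * D)%:E <= KD E w lam a b)%E.
  apply: ereal_sup_ubound; exists h => //; congr (_%:E).
  by rewrite resolvent_h winner_delta /D -tight -!mulrA -mulrBr.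
rewrite /kappa; move: KD_ge; case: (KD E w lam a b) => [r| |] KD_ge.
- rewrite lee_fin in KD_ge; rewrite -EFinM lee_fin -/D ler_pdivrMr //.
  have : k <= r / D by rewrite ler_pdivlMr.
  have : k <= 1 by rewrite invr_le1 ?unitfE; lra.
  nra.
- rewrite gt0_mulye ?lte_fin ?invr_gt0 //.
  by rewrite addeNy gt0_mulNye ?leNye ?lte_fin ?invr_gt0.
- by rewrite leeNy_eq in KD_ge.
Qed.

(* Any function f with D^{-1} f nonconstant has a nonzero multiple which is
   weighted 1-Lipschitz and tight on some pair a <> b: rescale by the maximal
   slope |F x - F y| / d(x,y) of F = D^{-1} f, attained at (a, b). *)
Lemma tight_rescaling (f : V -> R) x0 y0 :
  f x0 / degree E w x0 != f y0 / degree E w y0 ->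
  exists a b (c : R), [/\ a != b, c != 0, wLip1 E w (fun z => c * f z) &
    c * f a / degree E w a - c * f b / degree E w b = (hdist E a b)%:R].
Proof.
move=> Fxy; pose F x := f x / degree E w x.
pose slope (p : V * V) := `|F p.1 - F p.2| / (hdist E p.1 p.2)%:R.
have xy0 : x0 != y0 by apply: contraNneq Fxy => ->.
case: (@arg_maxP _ _ _ (x0, y0) (fun p : V * V => p.1 != p.2) slope xy0).
move=> -[a b] /= ab slope_max.
set D : R := (hdist E a b)%:R; have D0 : 0 < D by rewrite ltr0n hdist_gt0.
have slope0 : 0 < slope (x0, y0).
  by rewrite /slope /= divr_gt0 ?normr_gt0 ?subr_eq0 // ltr0n hdist_gt0.
have Fab : F a - F b != 0.
  have := lt_le_trans slope0 (slope_max (x0, y0) xy0).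
  by rewrite /slope /= pmulr_lgt0 ?invr_gt0 // normr_gt0.
pose c := D / (F a - F b).
have c0 : c != 0 by rewrite mulf_eq0 invr_eq0 negb_or (gt_eqF D0).
have cF z : c * f z / degree E w z = c * F z by rewrite mulrA.
exists a, b, c; split => //; last by rewrite !cF -mulrBr /c mulfVK.
move=> x y; rewrite !cF -mulrBr normrM.
have [-> | xy] := eqVneq x y; first by rewrite subrr normr0 mulr0.
have := slope_max (x, y) xy; rewrite /slope /= ler_pdivrMr ?ltr0n ?hdist_gt0 //.
have cD : `|c| * `|F a - F b| = D by rewrite -normrM /c mulfVK // ger0_norm // ltW.
move=> /(ler_wpM2l (normr_ge0 c)); rewrite mulrA (mulrA `|c|) cD.
by rewrite divff ?(gt_eqF D0) // mul1r.
Qed.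

End Curvature.

Lemma kappa_bar_le (R : realType) (V : finType) (E : {set {set V}})
    (w : {set V} -> R) (a b : V) (m : \bar R) :
  (forall lam : R, 0 < lam -> (kappa E w lam a b * (lam^-1)%:E <= m)%E) ->
  (kappa_bar E w a b <= m)%E.
Proof.
move=> bound; rewrite /kappa_bar limf_esupE.
apply: (@le_trans _ _ (ereal_sup
    ((fun lam : R => (kappa E w lam a b * (lam^-1)%:E)%E) @` [set x | 0 < x]))).
  by apply: ereal_inf_lbound; exists [set x | 0 < x] => //; exact: withinT.
by apply: ge_ereal_sup => _ [lam lam0 <-]; exact: bound.
Qed.

Theorem mainTheorem14 (R : realType) (V : finType) (E : {set {set V}})
  (w : {set V} -> R) (mu : R) (f : V -> R) :
  is_hypergraph E w ->
  (1 < #|V|)%N ->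
  0 < mu ->
  (exists x, f x != 0) ->
  nLap0 E w f = (fun z => mu * f z) ->
  (kappa_bar0 E w <= mu%:E)%E.
Proof.
move=> [_ w_pos deg_pos connected] _ mu_gt0 [x fx] eigen0.
have mu0 : mu != 0 by rewrite gt_eqF.
have eigen := nLap0_eigen mu0 fx eigen0.
have [x0 [y0 nonconst]] := eigen_nonconstant mu0 fx eigen.
have [a [b [c [ab c0 lip tight]]]] := tight_rescaling connected nonconst.
have eigen_c : (fun z => mu * (c * f z)) \in nLap E w (fun z => c * f z).
  rewrite (_ : (fun z => mu * _) = (fun z => c * (mu * f z))).
    exact: nLap_scale.
  by apply/funext => z; rewrite mulrCA.
apply: (@le_trans _ _ (kappa_bar E w a b)).
  by apply: ereal_inf_lbound; exists a, b; split => //; apply/eqP.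
apply: kappa_bar_le => lam lam0.
exact: (kappa_tight_eigen w_pos deg_pos mu_gt0 (hdist_gt0 connected ab) lip eigen_c tight lam0).
Qed.
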